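(* If $S$ is a simply-connected shape in the triangular grid with at least two points, then $S$ has at least one strictly convex and erodable (SCE) point with respect to $S$.
   Context: The triangular grid $G$ has as vertices (''points'') the points of the regular triangular lattice in the plane, two points adjacent iff at unit distance; each point has six incident edges, cyclically ordered clockwise. A shape is a finite set of points, identified with its induced subgraph. A connected shape $S$ partitions the plane into faces; the unique unbounded one is the outer face, and a bounded face containing a grid point not in $S$ is a hole. $S$ is simply-connected if it is connected and has no holes. The outer boundary of $S$ is the set of points of $S$ lying on the boundary of the outer face. A boundary point of $S$ is a point of $S$ adjacent to some point not in $S$. For a boundary point $v$, a local boundary $B$ of $v$ (w.r.t. $S$) is a maximal clockwise cyclic interval of consecutive edges incident to $v$ whose other endpoints are not in $S$; $|B|$ is its number of edges, and the boundary count of $v$ w.r.t. $B$ is $c(v,B)=|B|-2$. $v$ is strictly convex w.r.t. $B$ if $c(v,B)>0$. A point $v \in S$ is redundant if the subgraph induced by the neighbors of $v$ in $S$ is connected; it is erodable w.r.t. $S$ if it is redundant and on the outer boundary of $S$ (such a point has a single local boundary $B$). An erodable point that is strictly convex w.r.t. its single local boundary is called strictly convex and erodable (SCE) w.r.t. $S$. *)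

From HB Require Import structures.
From mathcomp Require Import all_boot all_order all_algebra.
From mathcomp Require Import finmap.
Set Implicit Arguments. Unset Strict Implicit. Unset Printing Implicit Defensive.
Import Order.TTheory GRing.Theory Num.Theory.
Local Open Scope fset_scope.

(* Points of the triangular lattice: (q, r) represents q * (1,0) + r * (1/2, sqrt 3/2). *)
Definition point := (int * int)%type.

(* The six unit directions, listed in clockwise cyclic order
   (angles 0, -60, -120, 180, 120, 60 degrees). *)
Definition dirs : seq point :=
  [:: (1, 0); (1, -1); (0, -1); (-1, 0); (-1, 1); (0, 1)]%R.

Definition nbr (v : point) (n : nat) : point :=
  let d := nth (0, 0)%R dirs (n %% 6) in ((v.1 + d.1)%R, (v.2 + d.2)%R).

Definition adj : rel point := fun u w => [exists i : 'I_6, w == nbr u i].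

Definition walk_in (P : pred point) (u w : point) : Prop :=
  exists p : seq point, [&& path adj u p, last u p == w & all P (u :: p)].

Definition induced_connected (P : pred point) : Prop :=
  forall u w, P u -> P w -> walk_in P u w.

Notation shape := {fset point}.

Definition shape_connected (S : shape) : Prop :=
  induced_connected (fun x => x \in S).

(* A grid point u not in S lies in the outer (unbounded) face of S: the faces of
   the plane cut by S that contain grid points correspond to the connected
   components of G restricted to the points not in S; the outer face is the
   one whose component is unbounded. *)
Definition in_outer_face (S : shape) (u : point) : Prop :=
  u \notin S /\
  forall n : nat, exists w : point,
    walk_in (fun x => x \notin S) u w /\ (n <= absz w.1 + absz w.2)%N.

Definition has_hole (S : shape) : Prop :=
  exists u : point, u \notin S /\ ~ in_outer_face S u.

Definition simply_connected (S : shape) : Prop :=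
  shape_connected S /\ ~ has_hole S.

(* v lies on the outer boundary of S: v is in S and lies on the boundary of the
   outer face, i.e. one of the six triangle wedges at v belongs to the outer
   face, i.e. some neighbour of v lies in the outer face. *)
Definition on_outer_boundary (S : shape) (v : point) : Prop :=
  v \in S /\ exists i : 'I_6, in_outer_face S (nbr v i).

Definition boundary_point (S : shape) (v : point) : Prop :=
  v \in S /\ exists i : 'I_6, nbr v i \notin S.

(* A local boundary of v: the maximal clockwise cyclic interval of the k edges
   in directions i, i+1, ..., i+k-1 (mod 6), all leading out of S. *)
Definition local_boundary (S : shape) (v : point) (i k : nat) : Prop :=
  [/\ boundary_point S v, (i < 6)%N, (1 <= k <= 6)%N,
      (forall j, (j < k)%N -> nbr v (i + j) \notin S)
    & ((k < 6)%N -> nbr v (i + 5) \in S /\ nbr v (i + k) \in S)].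

Definition boundary_count (k : nat) : int := (k%:Z - 2)%R.

Definition redundant (S : shape) (v : point) : Prop :=
  v \in S /\ induced_connected (fun u => (u \in S) && adj v u).

Definition erodable (S : shape) (v : point) : Prop :=
  redundant S v /\ on_outer_boundary S v.

Definition SCE (S : shape) (v : point) : Prop :=
  erodable S v /\
  exists i k, local_boundary S v i k /\ (0 < boundary_count k)%R.

From mathcomp Require Import all_boot all_order all_algebra finmap zify.
From mathcomp Require Import boolp.
Import Order.TTheory GRing.Theory Num.Theory.
Set Implicit Arguments. Unset Strict Implicit. Unset Printing Implicit Defensive.
Local Open Scope fset_scope.

(* We prove by induction on |S| that a connected hole-free shape with at least
   two points has two distinct SCE points.  Let v be the lexicographically
   largest point of S (top row, then rightmost).  Its neighbours in directions
   0, 4 and 5 lie outside S, so v is SCE unless its neighbours in directions 1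
   and 3 lie in S while the one in direction 2 does not.  In that case v is a
   cut vertex: a walk in S - v from direction 1 to direction 3 would close up,
   through v, into a cycle whose ray-crossing parity separates the outer point
   in direction 2 from infinity (a discrete Jordan curve argument).  The two
   branches of S at v are smaller connected hole-free shapes; by induction each
   has an SCE point other than v, and it stays SCE in S.  Applying the same
   argument to the 180-degree rotation of S, i.e. to the lowest-leftmost point,
   provides the second point. *)

(* Split on every comparison of the goal, then close by linear arithmetic;
   plain [lia] is far too slow on these boolean combinations. *)
Ltac decide_grid :=
  first [ by [] | (exfalso; lia)
        | (case: eqP => ?; decide_grid) | (case: ltP => ?; decide_grid)
        | (case: leP => ?; decide_grid) ].

Lemma nbr_mod v i : nbr v (i %% 6) = nbr v i.
Proof. by rewrite /nbr modn_mod. Qed.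

Lemma eq_nbr v i j : i = j %[mod 6] -> nbr v i = nbr v j.
Proof. by move=> eij; rewrite -nbr_mod eij nbr_mod. Qed.

Lemma nbr_ord v i : exists j : 'I_6, nbr v i = nbr v j.
Proof. by exists (Ordinal (ltn_pmod i (isT : 0 < 6))); rewrite /= nbr_mod. Qed.

Lemma adj_nbr v i : adj v (nbr v i).
Proof. by have [j ->] := nbr_ord v i; apply/existsP; exists j. Qed.

Lemma adjP u w : reflect (exists2 j, j < 6 & w = nbr u j) (adj u w).
Proof.
apply: (iffP existsP) => [[j /eqP ->]|[j j_lt ->]]; first by exists j.
by exists (Ordinal j_lt).
Qed.

Lemma nbrK v k : nbr (nbr v k) (k + 3) = v.
Proof.
rewrite (@eq_nbr v k (k %% 6)) ?(@eq_nbr _ (k + 3) (k %% 6 + 3)); try lia.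
move: (k %% 6) (ltn_pmod k (isT : 0 < 6)) => j; case: v => q r.
by case: j => [|[|[|[|[|[|j]]]]]] //= _; rewrite /nbr /=; congr pair; lia.
Qed.

Lemma nbrS v k : nbr v k.+1 = nbr (nbr v k) (k + 2).
Proof.
rewrite (@eq_nbr v k.+1 (k %% 6).+1) ?(@eq_nbr v k (k %% 6));
  rewrite ?(@eq_nbr _ (k + 2) (k %% 6 + 2)); try lia.
move: (k %% 6) (ltn_pmod k (isT : 0 < 6)) => j; case: v => q r.
by case: j => [|[|[|[|[|[|j]]]]]] //= _; rewrite /nbr /=; congr pair; lia.
Qed.

Lemma adj_sym : symmetric adj.
Proof.
suff adjC u w : adj u w -> adj w u by move=> u w; apply/idP/idP; apply: adjC.
by case/adjP=> k _ ->; rewrite -[X in adj _ X](nbrK u k) adj_nbr.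
Qed.

Lemma adj_nbrS v k : adj (nbr v k) (nbr v k.+1).
Proof. by rewrite nbrS adj_nbr. Qed.

Lemma adj_neq u w : adj u w -> u != w.
Proof.
case/adjP=> j j_lt ->; case: u => q r; rewrite /nbr xpair_eqE.
by case: j j_lt => [|[|[|[|[|[|j]]]]]] //= _; lia.
Qed.

Section Walks.
Implicit Types (P Q : pred point) (u w x y : point).

Lemma walk_refl P u : P u -> walk_in P u u.
Proof. by move=> Pu; exists [::]; rewrite /= eqxx Pu. Qed.

Lemma walk_ends P u w : walk_in P u w -> P u /\ P w.
Proof.
case=> p /and3P [_ /eqP <- /allP Pp]; split; first exact: Pp (mem_head _ _).
exact: Pp (mem_last _ _).
Qed.

Lemma walk_cons P u w x : adj u w -> P u -> walk_in P w x -> walk_in P u x.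
Proof.
move=> uw Pu [p /and3P [wp px Pp]].
by exists (w :: p); rewrite /= uw wp px Pu.
Qed.

Lemma sub_walk P Q u w :
  (forall x, P x -> Q x) -> walk_in P u w -> walk_in Q u w.
Proof.
move=> PQ [p /and3P [up pw Pp]]; exists p; rewrite up pw /=.
by apply: sub_all Pp => x /PQ.
Qed.

Lemma walk_trans P u w x : walk_in P u w -> walk_in P w x -> walk_in P u x.
Proof.
case=> p; elim: p u => [|y p IHp] u /and3P [up pw Pp] wx.
  by move: pw => /= /eqP ->.
case/andP: up => uy yp; case/andP: Pp => Pu Pp.
by apply: walk_cons uy Pu (IHp _ _ wx); apply/and3P.
Qed.

Lemma walk_rcons P u w x : walk_in P u w -> adj w x -> P x -> walk_in P u x.
Proof.
move=> uw wx Px.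
exact: walk_trans uw (walk_cons wx (walk_ends uw).2 (walk_refl Px)).
Qed.

Lemma walk_sym P u w : walk_in P u w -> walk_in P w u.
Proof.
case=> p; elim: p u => [|y p IHp] u /and3P [up pw Pp].
  by move: pw Pp => /= /eqP <- /andP [Pu _]; apply: walk_refl.
case/andP: up => uy yp; case/andP: Pp => Pu Pp.
have yu : adj y u by rewrite adj_sym.
by apply: walk_rcons (IHp _ _) yu Pu; apply/and3P.
Qed.

Lemma walk_reachable P x y :
  walk_in P x y -> walk_in (fun z => P z && `[< walk_in P x z >]) x y.
Proof.
case=> p; elim: p x => [|y1 p IHp] x /and3P [xp px Pp].
  move: px Pp => /= /eqP <- /andP [Px _].
  by apply: walk_refl; rewrite Px; apply/asboolP; apply: walk_refl.
case/andP: xp => xy1 y1p; case/andP: Pp => Px Pp.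
have xy1_walk : walk_in P x y1 by apply: walk_cons xy1 Px (walk_refl _); case/andP: Pp.
apply: walk_cons xy1 _ _; first by rewrite Px; apply/asboolP; apply: walk_refl.
apply: sub_walk (IHp y1 _) => [z /andP [Pz /asboolP y1z]|]; last exact/and3P.
by rewrite Pz; apply/asboolP; apply: walk_trans xy1_walk y1z.
Qed.

Lemma walk_last_step P x v :
  walk_in P x v -> x != v ->
  exists2 y, adj y v & walk_in (fun z => P z && (z != v)) x y.
Proof.
case=> p; elim: p x => [|y1 p IHp] x /and3P [xp px Pp] xv.
  by move: px xv => /= ->.
case/andP: xp => xy1 y1p; case/andP: Pp => Px Pp.
have [y1v|y1v] := eqVneq y1 v.
  by exists x; [rewrite -y1v | apply: walk_refl; rewrite Px xv].
have [|y yv y1y] := IHp y1 _ y1v; first exact/and3P.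
by exists y => //; apply: walk_cons xy1 _ y1y; rewrite Px xv.
Qed.

End Walks.

Fixpoint steps_parity (E : rel point) (x : point) (s : seq point) : bool :=
  if s is y :: s' then E x y (+) steps_parity E y s' else false.

Lemma steps_parity_cat E x s1 s2 :
  steps_parity E x (s1 ++ s2) =
  steps_parity E x s1 (+) steps_parity E (last x s1) s2.
Proof. by elim: s1 x => [|y s1 IHs] x //=; rewrite IHs addbA. Qed.

Lemma steps_parity_addb (E1 E2 : rel point) x s :
  steps_parity (fun y z => E1 y z (+) E2 y z) x s =
  steps_parity E1 x s (+) steps_parity E2 x s.
Proof. by elim: s x => //= y s IHs x; rewrite IHs addbACA. Qed.

Lemma steps_parity_boundary (B : pred point) x s :
  steps_parity (fun y z => B y (+) B z) x s = B x (+) B (last x s).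
Proof. by elim: s x => [|y s IHs] x /=; rewrite ?addbb // IHs addbA addbK. Qed.

Lemma eq_in_steps_parity (G : pred point) (E1 E2 : rel point) x s :
  path adj x s -> all G (x :: s) ->
  (forall y z, adj y z -> G y -> G z -> E1 y z = E2 y z) ->
  steps_parity E1 x s = steps_parity E2 x s.
Proof.
move=> + + E12; elim: s x => [|y s IHs] x //= /andP [xy ys] /and3P [Gx Gy Gs].
by rewrite E12 // IHs //= Gy.
Qed.

Lemma steps_parity_eq0 (G : pred point) (E : rel point) x s :
  path adj x s -> all G (x :: s) ->
  (forall y z, adj y z -> G y -> G z -> ~~ E y z) -> steps_parity E x s = false.
Proof.
move=> xs Gs nE; rewrite (@eq_in_steps_parity G E (fun _ _ => false)) => [|//|//|y z yz Gy Gz].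
  by elim: s {xs Gs} x => //= y s ->.
exact/negbTE/nE.
Qed.

Lemma closed_steps_parity (G B : pred point) (E : rel point) x s :
  path adj x s -> last x s = x -> all G (x :: s) ->
  (forall y z, adj y z -> G y -> G z -> E y z = B y (+) B z) ->
  steps_parity E x s = false.
Proof.
move=> xs sx Gs EB.
by rewrite (eq_in_steps_parity xs Gs EB) steps_parity_boundary sx addbb.
Qed.

Section Rays.
Local Open Scope ring_scope.

(* The ray leaves x inside the triangle x, x + (1, 0), x + (0, 1) and runs
   parallel to the rows towards increasing q: an edge crosses it iff it joins
   row x.2 to row x.2 + 1 with its lower end strictly to the right of x. *)
Definition crosses_up (x y z : point) : bool :=
  [&& y.2 == x.2, z.2 == x.2 + 1 & x.1 < y.1].

Definition crosses_ray (x y z : point) : bool :=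
  crosses_up x y z || crosses_up x z y.

(* Moving the base point one step changes the set of crossed edges by the edge
   boundary of a half-row (by nothing at all in direction 0). *)
Lemma crosses_ray_nbr x k : k \in [:: 0; 4; 5]%N ->
  exists B : pred point, forall y z, adj y z ->
    y \notin [:: x; nbr x k] -> z \notin [:: x; nbr x k] ->
    crosses_ray x y z (+) crosses_ray (nbr x k) y z = B y (+) B z.
Proof.
rewrite !inE => /or3P [] /eqP ->;
  [exists pred0 | exists (fun p => (p.2 == x.2 + 1) && (x.1 <= p.1))
  | exists (fun p => (p.2 == x.2 + 1) && (x.1 < p.1))];
  move=> y z /adjP [j j_lt ->]; case: x y => q r [a b];
  rewrite !inE /crosses_ray /crosses_up /nbr /= !xpair_eqE;
  by case: j j_lt => [|[|[|[|[|[|j]]]]]] //= _ *; decide_grid.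
Qed.

Definition in_box (M : nat) (p : point) := (absz p.1 < M)%N && (absz p.2 < M)%N.

Lemma in_box_exists (s : seq point) : exists M, all (in_box M) s.
Proof.
exists (\max_(p <- s) (maxn (absz p.1) (absz p.2)).+1)%N; apply/allP => p ps.
have := @leq_bigmax_seq _ s (fun _ => true)
  (fun p : point => (maxn (absz p.1) (absz p.2)).+1)%N p ps isT.
by rewrite /in_box; set M := \max_(_ <- _ | _) _; lia.
Qed.

Lemma crosses_ray_far (M : nat) w : (2 * M <= absz w.1 + absz w.2)%N ->
  exists B : pred point, forall y z, adj y z -> in_box M y -> in_box M z ->
    crosses_ray w y z = B y (+) B z.
Proof.
move=> w_far; have [|] := leqP M (absz w.2) => [M_w2|w2_M].
  exists pred0.
  move=> y z /adjP [j j_lt ->]; case: w w_far M_w2 y => q r /= _ M_r [a b].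
  rewrite /in_box /crosses_ray /crosses_up /nbr /=.
  by case: j j_lt => [|[|[|[|[|[|j]]]]]] //= _ *; decide_grid.
have [M_w1|w1_M] := leP M%:Z w.1.
  exists pred0.
  move=> y z /adjP [j j_lt ->]; case: w w_far w2_M M_w1 y => q r /= _ _ M_q [a b].
  rewrite /in_box /crosses_ray /crosses_up /nbr /=.
  by case: j j_lt => [|[|[|[|[|[|j]]]]]] //= _ *; decide_grid.
(* Far to the left, the ray crosses every edge of the box between rows w.2
   and w.2 + 1. *)
exists (fun p => w.2 < p.2).
move=> y z /adjP [j j_lt ->]; case: w w_far w2_M w1_M y => q r /= w_far r_M q_M [a b].
have {w_far r_M q_M} q_M : q <= - M%:Z by lia.
rewrite /in_box /crosses_ray /crosses_up /nbr /=.
by case: j j_lt => [|[|[|[|[|[|j]]]]]] //= _ *; decide_grid.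
Qed.

End Rays.

Section CrossingParity.
Variables (c0 : point) (c : seq point).
Hypotheses (c_walk : path adj c0 c) (c_closed : last c0 c = c0).

Definition crossing_parity x := steps_parity (crosses_ray x) c0 c.

Lemma crossing_parity_nbr x k : k < 6 ->
  x \notin c0 :: c -> nbr x k \notin c0 :: c ->
  crossing_parity x = crossing_parity (nbr x k).
Proof.
have shift y m : m \in [:: 0; 4; 5] -> y \notin c0 :: c -> nbr y m \notin c0 :: c ->
    crossing_parity y = crossing_parity (nbr y m).
  move=> m045 yc ymc; have [B BE] := crosses_ray_nbr y m045.
  apply/eqP; rewrite -[_ == _]negbK negb_eqb -steps_parity_addb.
  rewrite (closed_steps_parity c_walk c_closed _ BE) //.
  apply/allP => p pc; rewrite !inE negb_or.
  by apply/andP; split; [apply: contraNneq yc | apply: contraNneq ymc] => <-.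
(* A step in direction 1, 2 or 3 is a step in direction 4, 5 or 0 backwards. *)
move=> k_lt xc kc; have [k045|k123] := boolP (k \in [:: 0; 4; 5]); first exact: shift.
rewrite -[in LHS](nbrK x k) -nbr_mod; symmetry; apply: shift => //.
  by case: k k_lt k123 {xc kc} => [|[|[|[|[|[|k]]]]]].
by rewrite nbr_mod nbrK.
Qed.

Lemma crossing_parity_walk (P : pred point) u w :
  (forall p, P p -> p \notin c0 :: c) ->
  walk_in P u w -> crossing_parity u = crossing_parity w.
Proof.
move=> Pc [p]; elim: p u => [|y p IHp] u /and3P [up /eqP pw Pp].
  by rewrite -pw.
case/andP: up => uy yp; case/andP: Pp => Pu Pp.
case/adjP: uy yp pw Pp => j j_lt -> yp pw Pp.
rewrite (crossing_parity_nbr j_lt) ?Pc //; last by case/andP: Pp.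
by apply: IHp; apply/and3P; split => //; apply/eqP.
Qed.

Lemma crossing_parity_far :
  exists N, forall w, N <= absz w.1 + absz w.2 -> crossing_parity w = false.
Proof.
have [M c_box] := in_box_exists (c0 :: c).
exists (2 * M) => w w_far; have [B BE] := crosses_ray_far w_far.
exact: closed_steps_parity c_walk c_closed c_box BE.
Qed.

End CrossingParity.

Definition hole_free (S : {fset point}) := forall u, u \notin S -> in_outer_face S u.

Lemma sub_in_outer_face (S T : {fset point}) x :
  T `<=` S -> in_outer_face S x -> in_outer_face T x.
Proof.
move=> /fsubsetP TS [xS far]; split; first by apply: contra xS; apply: TS.
move=> n; have [w [xw w_far]] := far n; exists w; split => //.
by apply: sub_walk xw => y; apply: contra; apply: TS.
Qed.

Definition lex_key (v : point) : int *l int := (v.2, v.1).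

Lemma lex_key_inj : injective lex_key.
Proof. by case=> a b [c d] [-> ->]. Qed.

Lemma lex_key_lt x y :
  (lex_key x < lex_key y)%O = ((x.2 < y.2) || (x.2 == y.2) && (x.1 < y.1))%R.
Proof. by rewrite ltxi_pair /=; lia. Qed.

Definition top_right (S : {fset point}) v :=
  v \in S /\ {in S, forall x, x != v -> (lex_key x < lex_key v)%O}.

Lemma top_right_exists (S : {fset point}) x0 : x0 \in S -> exists v, top_right S v.
Proof.
move=> x0S; have [/= v _ v_max] := @arg_maxP _ _ S [` x0S] xpredT (lex_key \o val) isT.
exists (val v); split=> [|x xS xv]; first exact: valP.
by rewrite lt_neqAle (inj_eq lex_key_inj) xv (v_max [` xS]).
Qed.

Lemma lex_key_nbr_gt v k : k \in [:: 0; 4; 5] -> (lex_key v < lex_key (nbr v k))%O.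
Proof. by rewrite !inE lex_key_lt; case: v => q r; case/or3P => /eqP ->; rewrite /nbr /=; lia. Qed.

Lemma crosses_ray_below v y z : adj y z ->
  (lex_key y < lex_key v)%O -> (lex_key z < lex_key v)%O -> ~~ crosses_ray (nbr v 2) y z.
Proof.
case/adjP=> j j_lt ->; rewrite !lex_key_lt; case: v y => q r [a b].
rewrite /crosses_ray /crosses_up /nbr /=.
by case: j j_lt => [|[|[|[|[|[|j]]]]]] //= _ *; decide_grid.
Qed.

Lemma crosses_ray_around v :
  crosses_ray (nbr v 2) v (nbr v 1) /\ ~~ crosses_ray (nbr v 2) (nbr v 3) v.
Proof. by case: v => q r; rewrite /crosses_ray /crosses_up /nbr /=; split; lia. Qed.

Section TopRight.
Variables (S : {fset point}) (v : point).
Hypothesis v_top : top_right S v.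

Lemma top_right_nbr_notin k : k \in [:: 0; 4; 5] -> nbr v k \notin S.
Proof.
move=> k045; apply/negP => kS.
have := v_top.2 _ kS; rewrite eq_sym adj_neq ?adj_nbr // => /(_ isT) below.
by have := lt_trans below (lex_key_nbr_gt v k045); rewrite ltxx.
Qed.

Lemma top_right_nbr_in y : y \in S -> adj v y -> y \in [:: nbr v 1; nbr v 2; nbr v 3].
Proof.
move=> yS /adjP [j j_lt ey]; move: yS; rewrite {y}ey !inE.
case: j j_lt => [|[|[|[|[|[|j]]]]]] //= _; rewrite ?eqxx ?orbT //.
all: by rewrite (negbTE (top_right_nbr_notin _)).
Qed.

Lemma top_right_redundant :
  (nbr v 1 \in S -> nbr v 3 \in S -> nbr v 2 \in S) -> redundant S v.
Proof.
move=> not_pinched; split => [|u w]; first exact: v_top.1.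
have [v2S|v2S] := boolP (nbr v 2 \in S).
  suff to_v2 y : (y \in S) && adj v y -> walk_in (fun u => (u \in S) && adj v u) y (nbr v 2).
    by move=> /to_v2 uv2 /to_v2 /walk_sym; apply: walk_trans.
  have N2 : (nbr v 2 \in S) && adj v (nbr v 2) by rewrite v2S adj_nbr.
  move=> /[dup] Ny /andP [yS vy]; move: (top_right_nbr_in yS vy) Ny.
  rewrite !inE => /or3P [] /eqP -> Ny; last 2 first.
  - exact: walk_refl.
  - by apply: walk_cons _ Ny (walk_refl N2); rewrite adj_sym adj_nbrS.
  - exact: walk_cons (adj_nbrS v 1) Ny (walk_refl N2).
have single y : y \in S -> adj v y -> y = if nbr v 1 \in S then nbr v 1 else nbr v 3.
  move=> yS vy; move: (top_right_nbr_in yS vy); rewrite !inE.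
  case/or3P=> /eqP ey; first by move: yS; rewrite ey => ->.
    by rewrite -ey yS in v2S.
  case: ifP => // v1S; have v3S : nbr v 3 \in S by rewrite -ey.
  by rewrite not_pinched in v2S.
move=> /andP [uS vu] /andP [wS vw].
by rewrite (single u uS vu) -(single w wS vw); apply: walk_refl; rewrite /= wS vw.
Qed.

Lemma top_right_local_boundary :
  (nbr v 1 \in S -> nbr v 3 \in S -> nbr v 2 \in S) ->
  exists i k, local_boundary S v i k /\ 2 < k.
Proof.
move=> not_pinched.
have n0 : nbr v 0 \notin S by apply: top_right_nbr_notin.
have n4 : nbr v 4 \notin S by apply: top_right_nbr_notin.
have n5 : nbr v 5 \notin S by apply: top_right_nbr_notin.
have vb : boundary_point S v by split; [exact: v_top.1 | exists ord0].
case h1: (nbr v 1 \in S); case h2: (nbr v 2 \in S); case h3: (nbr v 3 \in S).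
- by exists 4, 3; split=> //; split=> // -[|[|[|j]]] //.
- by exists 3, 4; split=> //; split=> // -[|[|[|[|j]]]] //; rewrite h3.
- by have := not_pinched h1 h3; rewrite h2.
- by exists 2, 5; split=> //; split=> // -[|[|[|[|[|j]]]]] //; rewrite ?h2 ?h3.
- by exists 4, 4; split=> //; split=> // -[|[|[|[|j]]]] //; rewrite h1.
- by exists 3, 5; split=> //; split=> // -[|[|[|[|[|j]]]]] //; rewrite ?h1 ?h3.
- by exists 4, 5; split=> //; split=> // -[|[|[|[|[|j]]]]] //; rewrite ?h1 ?h2.
- by exists 0, 6; split=> //; split=> // -[|[|[|[|[|[|j]]]]]] //; rewrite ?h1 ?h2 ?h3.
Qed.

Lemma top_right_SCE : hole_free S ->
  (nbr v 1 \in S -> nbr v 3 \in S -> nbr v 2 \in S) -> SCE S v.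
Proof.
move=> S_hf not_pinched; split; first split.
- exact: top_right_redundant.
- split; first exact: v_top.1.
  by exists ord0; apply: S_hf; apply: top_right_nbr_notin.
- have [i [k [vik k_gt2]]] := top_right_local_boundary not_pinched.
  by exists i, k; split=> //; rewrite /boundary_count; lia.
Qed.

Lemma top_right_separates : hole_free S -> nbr v 2 \notin S ->
  ~ walk_in (fun x => (x \in S) && (x != v)) (nbr v 1) (nbr v 3).
Proof.
move=> S_hf v2S [p /and3P [p_walk /eqP p_last p_in]].
pose c := rcons (nbr v 1 :: p) v.
have c_walk : path adj v c.
  by rewrite rcons_path /= adj_nbr p_walk p_last adj_sym adj_nbr.
have c_closed : last v c = v by rewrite last_rcons.
have c_in x : x \in v :: c -> x \in S.
  rewrite in_cons mem_rcons in_cons orbA orbb.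
  by case/orP=> [/eqP -> | /(allP p_in) /andP []]; first exact: v_top.1.
(* The ray from the outer point nbr v 2 meets the cycle only at its edge from v
   to nbr v 1, since the rest of the cycle lies lexicographically below v. *)
have v2_odd : crossing_parity v c (nbr v 2).
  rewrite /crossing_parity /c -cats1 steps_parity_cat /= p_last.
  rewrite (@steps_parity_eq0 (fun x => (x \in S) && (x != v)) _ _ p) //; last first.
    move=> y z yz /andP [yS yv] /andP [zS zv].
    exact: crosses_ray_below yz (v_top.2 _ yS yv) (v_top.2 _ zS zv).
  by have [cross1 cross3] := crosses_ray_around v; rewrite cross1 (negbTE cross3).
have [N far] := crossing_parity_far c_walk c_closed.
have [_ /(_ N) [w [v2w w_far]]] := S_hf _ v2S.
have off_c x : x \notin S -> x \notin v :: c by apply: contra => /c_in.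
by move: v2_odd; rewrite (crossing_parity_walk c_walk c_closed off_c v2w) far.
Qed.

End TopRight.

Definition branch (S : {fset point}) (v b : point) : {fset point} :=
  [fset x in S | (x == v) || `[< walk_in (fun y => (y \in S) && (y != v)) b x >]].

Section Branch.
Variables (S : {fset point}) (v a b e : point).
Let Sv := fun y => (y \in S) && (y != v).
Hypotheses (vS : v \in S) (aS : a \in S) (bS : b \in S) (va : adj v a) (vb : adj v b).

Lemma branch_sub : branch S v b `<=` S.
Proof. by apply/fsubsetP => x; rewrite !inE => /andP []. Qed.

Lemma branch_v : v \in branch S v b.
Proof. by rewrite !inE vS eqxx. Qed.

Lemma branch_b : b \in branch S v b.
Proof.
rewrite !inE bS; apply/orP; right; apply/asboolP; apply: walk_refl.
by rewrite /= bS eq_sym adj_neq.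
Qed.

Lemma branch_walk x : x \in branch S v b -> x != v -> walk_in Sv b x.
Proof. by rewrite !inE => /andP [_ /orP [/eqP -> | /asboolP //]]; rewrite eqxx. Qed.

Lemma branch_nbr w i : w \in branch S v b -> w != v ->
  (nbr w i \in branch S v b) = (nbr w i \in S).
Proof.
move=> wB wv; apply/idP/idP => [|wiS]; first by apply/fsubsetP/branch_sub.
have [->|wi_v] := eqVneq (nbr w i) v; first exact: branch_v.
rewrite !inE wiS; apply/orP; right; apply/asboolP.
by apply: walk_rcons (branch_walk wB wv) (adj_nbr _ _) _; rewrite /Sv wiS wi_v.
Qed.

Lemma branch_connected : shape_connected (branch S v b).
Proof.
suff from_v x : x \in branch S v b -> walk_in (fun y => y \in branch S v b) v x.
  by move=> x y /from_v /walk_sym xv /from_v; apply: walk_trans.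
move=> xB; have [->|xv] := eqVneq x v; first exact/walk_refl/branch_v.
apply: walk_cons vb branch_v _.
apply: sub_walk (walk_reachable (branch_walk xB xv)) => z /andP [/andP [zS _] bz].
suff: z \in branch S v b by [].
by rewrite !inE zS bz orbT.
Qed.

Hypothesis ab_sep : ~ walk_in Sv a b.

Lemma branch_card : 2 <= #|` branch S v b| < #|` S|.
Proof.
have aB : a \notin branch S v b.
  rewrite !inE aS eq_sym (negbTE (adj_neq va)) /=.
  by apply/negP => /asboolP /walk_sym.
apply/andP; split.
  have vbB : [fset v; b] `<=` branch S v b.
    by apply/fsubsetP => x /fset2P [] ->; [exact: branch_v | exact: branch_b].
  by apply: leq_trans (fsubset_leq_card vbB); rewrite cardfs2 adj_neq.
rewrite (cardfsD1 a S) aS add1n ltnS; apply: fsubset_leq_card.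
apply/fsubsetP => x xB; rewrite !inE (fsubsetP branch_sub _ xB) andbT.
by apply: contraNneq aB => <-.
Qed.

Hypotheses (S_hf : hole_free S) (S_conn : shape_connected S).
Hypotheses (v_nbrs : {in S, forall y, adj v y -> (y == a) || (y == b)}).
Hypotheses (ae : adj a e) (eS : e \notin S).

(* A point of S outside the branch reaches v only through a, hence reaches the
   outer point e while avoiding the branch. *)
Lemma branch_hole_free : hole_free (branch S v b).
Proof.
move=> x xB; have [xS|xS] := boolP (x \in S); last first.
  exact: sub_in_outer_face branch_sub (S_hf xS).
have xv : x != v by apply: contraNneq xB => ->; exact: branch_v.
have off_branch z : walk_in Sv x z -> z \notin branch S v b.
  move=> xz; apply: contra xB => zB; have [_ /andP [_ zv]] := walk_ends xz.
  rewrite !inE xS; apply/orP; right; apply/asboolP.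
  exact: walk_trans (branch_walk zB zv) (walk_sym xz).
have [y yv xy] := walk_last_step (S_conn xS vS) xv.
have ye : adj y e.
  have [_ /andP [yS _]] := walk_ends xy.
  case/orP: (v_nbrs yS (etrans (adj_sym _ _) yv)) => /eqP yab; first by rewrite yab.
  by move: (off_branch y xy); rewrite yab branch_b.
have xe : walk_in (fun z => z \notin branch S v b) x e.
  apply: walk_rcons _ ye _; last by apply: contra eS; apply/fsubsetP/branch_sub.
  by apply: sub_walk (walk_reachable xy) => z /andP [_ /asboolP]; apply: off_branch.
have [_ e_far] := sub_in_outer_face branch_sub (S_hf eS).
split=> // n; have [w [ew w_far]] := e_far n.
by exists w; split=> //; apply: walk_trans xe ew.
Qed.

End Branch.

Lemma SCE_sub (S T : {fset point}) w : hole_free S -> T `<=` S ->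
  (forall i, (nbr w i \in T) = (nbr w i \in S)) -> SCE T w -> SCE S w.
Proof.
move=> S_hf /fsubsetP TS Tnbr.
move=> [[[wT w_red] _] [i [k [[[_ [j wjT]] i_lt k_range k_out k_in] k_pos]]]].
have wS := TS _ wT.
have N_eq u : ((u \in T) && adj w u) = ((u \in S) && adj w u).
  by case/boolP: (adj w u) => [/adjP [m _ ->]|]; rewrite ?andbF ?Tnbr.
split; first split.
- split=> // u1 u2 Nu1 Nu2.
  have := w_red u1 u2; rewrite /= !N_eq => /(_ Nu1 Nu2).
  by apply: sub_walk => u; rewrite /= N_eq.
- split=> //; have [m im] := nbr_ord w (i + 0); exists m; rewrite -im; apply: S_hf.
  by rewrite -Tnbr; apply: k_out; case/andP: k_range.
- exists i, k; split=> //; split=> //.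
  + by split=> //; exists j; rewrite -Tnbr.
  + by move=> m m_lt; rewrite -Tnbr; apply: k_out.
  + by rewrite -!Tnbr.
Qed.

Section Rotation.
Local Open Scope ring_scope.

Definition rot180 (x : point) : point := (- x.1, - x.2).

Lemma rot180K : involutive rot180.
Proof. by case=> a b; rewrite /rot180 /= !opprK. Qed.

Lemma nbr_rot180 x k : nbr (rot180 x) k = rot180 (nbr x (k + 3)).
Proof.
rewrite (@eq_nbr _ k (k %% 6)) ?(@eq_nbr x (k + 3) (k %% 6 + 3)); try lia.
move: (k %% 6)%N (ltn_pmod k (isT : (0 < 6)%N)) => j; case: x => a b.
by case: j => [|[|[|[|[|[|j]]]]]] //= _; rewrite /nbr /rot180 /=; congr pair; lia.
Qed.

Lemma adj_rot180 u w : adj (rot180 u) (rot180 w) = adj u w.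
Proof.
suff adjR y z : adj y z -> adj (rot180 y) (rot180 z).
  by apply/idP/idP => /adjR; rewrite ?rot180K.
case/adjP=> j _ ->; rewrite -(@eq_nbr y (j + 3 + 3) j) -?nbr_rot180 ?adj_nbr //.
by rewrite -addnA modnDr.
Qed.

Lemma walk_rot180 (P : pred point) u w :
  walk_in P u w -> walk_in (P \o rot180) (rot180 u) (rot180 w).
Proof.
case=> p; elim: p u => [|y p IHp] u /and3P [up pw Pp].
  by move: pw Pp => /= /eqP <- /andP [Pu _]; apply: walk_refl; rewrite /= rot180K.
case/andP: up => uy yp; case/andP: Pp => Pu Pp.
apply: (@walk_cons _ _ (rot180 y)); first by rewrite adj_rot180.
  by rewrite /= rot180K.
by apply: IHp; apply/and3P.
Qed.

Lemma mem_rot180 (S : {fset point}) x : (x \in rot180 @` S) = (rot180 x \in S).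
Proof.
apply/imfsetP/idP => [[y yS ->]|xS]; first by rewrite rot180K.
by exists (rot180 x); rewrite ?rot180K.
Qed.

Lemma lex_key_rot180 x y :
  (lex_key (rot180 x) < lex_key (rot180 y))%O = (lex_key y < lex_key x)%O.
Proof. by rewrite !lex_key_lt /rot180 /=; lia. Qed.

End Rotation.

Section RotatedShape.
Variable S : {fset point}.

Lemma card_rot180 : #|` rot180 @` S| = #|` S|.
Proof. exact/card_imfset/(can_inj rot180K). Qed.

Lemma rot180_imfsetK : rot180 @` (rot180 @` S) = S.
Proof. by apply/fsetP => x; rewrite !mem_rot180 rot180K. Qed.

Lemma rot180_connected : shape_connected S -> shape_connected (rot180 @` S).
Proof.
move=> S_conn u w; rewrite !mem_rot180 => uS wS.
have := walk_rot180 (S_conn _ _ uS wS); rewrite !rot180K.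
by apply: sub_walk => y; rewrite /= mem_rot180.
Qed.

Lemma in_outer_face_rot180 x : in_outer_face S x -> in_outer_face (rot180 @` S) (rot180 x).
Proof.
case=> xS far; split; first by rewrite mem_rot180 rot180K.
move=> n; have [w [xw w_far]] := far n; exists (rot180 w); split.
  by apply: sub_walk (walk_rot180 xw) => y; rewrite /= mem_rot180.
by rewrite /rot180 /= !abszN.
Qed.

Lemma rot180_hole_free : hole_free S -> hole_free (rot180 @` S).
Proof.
move=> S_hf u; rewrite mem_rot180 => uS.
by rewrite -(rot180K u); apply: in_outer_face_rot180; apply: S_hf.
Qed.

Lemma SCE_rot180 w : SCE S w -> SCE (rot180 @` S) (rot180 w).
Proof.
move=> [[[wS w_red] [_ [i wi_out]]] [i0 [k [[[_ [j wjS]] i0_lt k_range k_out k_in] k_pos]]]].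
have w'S : rot180 w \in rot180 @` S by rewrite mem_rot180 rot180K.
have mem_nbr m : (nbr (rot180 w) m \in rot180 @` S) = (nbr w (m + 3) \in S).
  by rewrite nbr_rot180 mem_rot180 rot180K.
have N_rot y : ((rot180 y \in S) && adj w (rot180 y)) =
               ((y \in rot180 @` S) && adj (rot180 w) y).
  by rewrite mem_rot180 -adj_rot180 rot180K.
have shift m : nbr w ((i0 + 3) %% 6 + m + 3) = nbr w (i0 + m) by apply: eq_nbr; lia.
split; first split.
- split=> // u1 u2; rewrite -!N_rot => /(w_red _ _) h /h /walk_rot180.
  by rewrite !rot180K; apply: sub_walk => y; rewrite /= N_rot.
- split=> //; have [m e_m] := nbr_ord (rot180 w) (i + 3); exists m.
  rewrite -e_m nbr_rot180 (@eq_nbr _ (i + 3 + 3) i); last by lia.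
  exact: in_outer_face_rot180.
- exists ((i0 + 3) %% 6), k; split=> //; split=> //.
  + split=> //; have [m e_m] := nbr_ord (rot180 w) (j + 3); exists m.
    by rewrite -e_m mem_nbr (@eq_nbr _ (j + 3 + 3) j) //; lia.
  + by rewrite ltn_pmod.
  + by move=> m m_lt; rewrite mem_nbr shift; apply: k_out.
  + by move=> k_lt; rewrite !mem_nbr !shift; apply: k_in.
Qed.

End RotatedShape.

Lemma SCE_rot180V S w : SCE (rot180 @` S) w -> SCE S (rot180 w).
Proof. by move/SCE_rot180; rewrite rot180_imfsetK. Qed.

Definition two_SCE (S : {fset point}) := exists w1 w2, [/\ w1 != w2, SCE S w1 & SCE S w2].

Lemma SCE_mem S w : SCE S w -> w \in S.
Proof. by case=> [[[]]]. Qed.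

Lemma two_SCE_rot180 S : two_SCE (rot180 @` S) -> two_SCE S.
Proof.
case=> w1 [w2 [w12 s1 s2]]; exists (rot180 w1), (rot180 w2).
by split; rewrite ?(inj_eq (can_inj rot180K)) //; apply: SCE_rot180V.
Qed.

Lemma fset_other (K : choiceType) (S : {fset K}) v :
  2 <= #|` S| -> exists2 z, z \in S & z != v.
Proof.
move=> S2; have : S `\ v != fset0.
  by rewrite -cardfs_gt0; move: S2; rewrite (cardfsD1 v S); lia.
by case/fset0Pn => z /fsetD1P [zv zS]; exists z.
Qed.

Lemma top_right_rot180_neq S v v' : 2 <= #|` S| ->
  top_right S v -> top_right (rot180 @` S) v' -> v != rot180 v'.
Proof.
move=> S2 [vS v_max] [_ v'_max]; apply/eqP => vv'.
have [z zS zv] := fset_other v S2.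
have z_below := v_max z zS zv.
have : (lex_key (rot180 z) < lex_key v')%O.
  apply: v'_max; first by rewrite mem_rot180 rot180K.
  by rewrite -(inj_eq (can_inj rot180K)) rot180K -vv'.
rewrite -[v']rot180K -vv' lex_key_rot180 => z_above.
by have := lt_trans z_below z_above; rewrite ltxx.
Qed.

Section InductionStep.
Variable S : {fset point}.
Hypotheses (S_conn : shape_connected S) (S_hf : hole_free S).
Hypothesis IH : forall T : {fset point}, #|` T| < #|` S| ->
  shape_connected T -> hole_free T -> 2 <= #|` T| -> two_SCE T.

Lemma branch_SCE_point v a b e : v \in S -> a \in S -> b \in S ->
  adj v a -> adj v b -> {in S, forall y, adj v y -> (y == a) || (y == b)} ->
  ~ walk_in (fun x => (x \in S) && (x != v)) a b -> adj a e -> e \notin S ->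
  exists2 w, w \in branch S v b & w != v /\ SCE S w.
Proof.
move=> vS aS bS va vb v_nbrs ab_sep ae eS.
have /andP [B_ge2 B_lt] := branch_card vS aS bS va vb ab_sep.
have [w1 [w2 [w12 s1 s2]]] := IH B_lt (branch_connected vS vb)
  (branch_hole_free vS bS vb S_hf S_conn v_nbrs ae eS) B_ge2.
have [w [wB wv wSCE]] : exists w, [/\ w \in branch S v b, w != v & SCE (branch S v b) w].
  have [w1v|w1v] := eqVneq w1 v; last by exists w1; rewrite (SCE_mem s1).
  by exists w2; split=> //; [exact: SCE_mem s2 | rewrite -w1v eq_sym].
exists w => //; split=> //; apply: SCE_sub S_hf (branch_sub S v b) _ wSCE.
by move=> i; rewrite branch_nbr.
Qed.

Lemma top_right_SCE_or_two_SCE v : top_right S v -> SCE S v \/ two_SCE S.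
Proof.
move=> v_top; have vS := v_top.1.
have [/and3P [v1S v3S v2S]|not_pinched] :=
  boolP [&& nbr v 1 \in S, nbr v 3 \in S & nbr v 2 \notin S]; last first.
  by left; apply: top_right_SCE => // v1S v3S; move: not_pinched; rewrite v1S v3S negbK.
right; have sep := top_right_separates v_top S_hf v2S.
have v_nbrs : {in S, forall y, adj v y -> (y == nbr v 1) || (y == nbr v 3)}.
  move=> y yS vy; move: (top_right_nbr_in v_top yS vy); rewrite !inE.
  by case/or3P=> [->|/eqP y2|->]; rewrite ?orbT //; rewrite -y2 yS in v2S.
have [w3 w3B [w3v s3]] := branch_SCE_point vS v1S v3S (adj_nbr v 1) (adj_nbr v 3)
  v_nbrs sep (adj_nbrS v 1) v2S.
have v_nbrs' : {in S, forall y, adj v y -> (y == nbr v 3) || (y == nbr v 1)}.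
  by move=> y yS vy; rewrite orbC v_nbrs.
have sep' : ~ walk_in (fun x => (x \in S) && (x != v)) (nbr v 3) (nbr v 1).
  by move/walk_sym.
have v32 : adj (nbr v 3) (nbr v 2) by rewrite adj_sym adj_nbrS.
have [w1 w1B [w1v s1]] := branch_SCE_point vS v3S v1S (adj_nbr v 3) (adj_nbr v 1)
  v_nbrs' sep' v32 v2S.
exists w3, w1; split=> //; apply/eqP => w31; apply: sep.
by apply: walk_trans (branch_walk w1B w1v) _; rewrite -w31; apply/walk_sym/branch_walk.
Qed.

End InductionStep.

Lemma two_SCE_points S : shape_connected S -> hole_free S -> 2 <= #|` S| -> two_SCE S.
Proof.
have [n] := ubnP #|` S|; elim: n S => // n IHn S /ltnSE S_le S_conn S_hf S2.
have IH T : #|` T| < #|` S| -> shape_connected T -> hole_free T -> 2 <= #|` T| -> two_SCE T.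
  by move=> T_lt; apply: IHn; apply: leq_trans T_lt S_le.
have /fset0Pn [x xS] : S != fset0 by rewrite -cardfs_gt0 (leq_trans _ S2).
have [v v_top] := top_right_exists xS.
have [v' v'_top] : exists v', top_right (rot180 @` S) v'.
  by apply: (@top_right_exists _ (rot180 x)); rewrite mem_rot180 rot180K.
have [vSCE|//] := top_right_SCE_or_two_SCE S_conn S_hf IH v_top.
have IH' T : #|` T| < #|` rot180 @` S| -> shape_connected T -> hole_free T ->
    2 <= #|` T| -> two_SCE T.
  by rewrite card_rot180; apply: IH.
have [v'SCE|/two_SCE_rot180 //] := top_right_SCE_or_two_SCE
  (rot180_connected S_conn) (rot180_hole_free S_hf) IH' v'_top.
exists v, (rot180 v'); split=> //; first exact: top_right_rot180_neq S2 v_top v'_top.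
exact: SCE_rot180V v'SCE.
Qed.

Theorem proposition2p3 (S : {fset point}) :
  simply_connected S -> (2 <= #|` S|)%N -> exists v, v \in S /\ SCE S v.
Proof.
case=> S_conn no_hole S2.
have S_hf : hole_free S.
  by move=> u uS; apply: contrapT => u_in; apply: no_hole; exists u.
have [w [_ [_ wSCE _]]] := two_SCE_points S_conn S_hf S2.
by exists w; split=> //; apply: SCE_mem.
Qed.
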